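(* Let $M$ be a magma satisfying $(xy)z = xy$ and $x(yz) = xy$ for all $x,y,z\in M$. Then $M$ satisfies $xy = xz$ and $(xy)z = xy$ for all $x,y,z\in M$ if and only if $M$ avoids the magma $P$ on $\{0,1,2,3\}$ with Cayley table \[ \begin{array}{c|cccc} P & 0 & 1 & 2 & 3 \\ \hline 0 & 2 & 3 & 2 & 2 \\ 1 & 1 & 1 & 1 & 1 \\ 2 & 2 & 2 & 2 & 2 \\ 3 & 3 & 3 & 3 & 3 \end{array}. \]
   Context: A magma is a nonempty set with a binary operation, written by juxtaposition. A magma $M$ avoids a magma $F$ if no submagma of $M$ is isomorphic to $F$. In the Cayley table, the entry in row $i$, column $j$ is $i\cdot j$. *)

From mathcomp Require Import all_boot.
Set Implicit Arguments. Unset Strict Implicit. Unset Printing Implicit Defensive.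

Record magma := Magma { carrier :> Type; op : carrier -> carrier -> carrier;
                        inhab : carrier }.

Definition submagma (M : magma) (S : carrier M -> Prop) : Prop :=
  (exists x, S x) /\ forall x y, S x -> S y -> S (op x y).

Definition sub_iso (F M : magma) (S : carrier M -> Prop) : Prop :=
  exists f : carrier F -> carrier M,
    (forall a, S (f a)) /\
    (forall a b, f a = f b -> a = b) /\
    (forall y, S y -> exists a, f a = y) /\
    (forall a b, f (op a b) = op (f a) (f b)).

Definition avoids (M F : magma) : Prop :=
  ~ exists S : carrier M -> Prop, submagma S /\ sub_iso F S.

Definition P_table (i j : 'I_4) : 'I_4 :=
  match val i, val j with
  | 0, 1 => inord 3
  | 0, _ => inord 2
  | 1, _ => inord 1
  | 2, _ => inord 2
  | _, _ => inord 3
  end.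

Definition P : magma := Magma P_table ord0.

(* In P we have 0 0 = 2 <> 3 = 0 1, so P violates the law x y = x z, and so
   does every magma containing a copy of P.  Conversely, under the two
   hypotheses every product is a left zero and x (y z) = x y; hence if
   a a <> a b, the elements a, b b, a a, a b are pairwise distinct and multiply
   exactly like 0, 1, 2, 3 in P.  So avoiding P forces a a = a b, i.e.
   x y = x z, while (x y) z = x y holds by hypothesis. *)
From Stdlib Require Import Classical.
From mathcomp Require Import all_boot.

Definition left_constant (M : magma) : Prop :=
  forall x y z : M, op x y = op x z.

Lemma left_constant_inj_morph (F M : magma) (f : F -> M) :
  injective f -> {morph f : x y / op x y} ->
  left_constant M -> left_constant F.
Proof. by move=> f_inj f_morph constM x y z; apply: f_inj; rewrite !f_morph. Qed.

Lemma inj_morph_not_avoids (F M : magma) (f : F -> M) :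
  injective f -> {morph f : x y / op x y} -> ~ avoids M F.
Proof.
move=> f_inj f_morph; apply; exists (fun y => exists a, f a = y); split.
  split; first by exists (f (inhab F)), (inhab F).
  by move=> _ _ [a <-] [b <-]; exists (op a b); rewrite f_morph.
exists f; split; first by move=> a; exists a.
by split=> //; split=> // y [a <-]; exists a.
Qed.

Lemma P_not_left_constant : ~ left_constant P.
Proof.
by move=> /(_ ord0 ord0 (inord 1)) /(congr1 val); rewrite /= /P_table /= !inordK.
Qed.

Lemma left_constant_avoids_P (M : magma) : left_constant M -> avoids M P.
Proof.
move=> constM [S [_ [f [_ [f_inj [_ f_morph]]]]]].
exact: P_not_left_constant (@left_constant_inj_morph P M f f_inj f_morph constM).
Qed.

Section CopyOfP.

Variable M : magma.
Hypothesis prod_left_zero : forall x y z : M, op (op x y) z = op x y.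
Hypothesis op_prod_right : forall x y z : M, op x (op y z) = op x y.

Definition P_copy (a b : M) (i : P) : M :=
  match nat_of_ord i with 0 => a | 1 => op b b | 2 => op a a | _ => op a b end.

Lemma P_copy_morph (a b : M) : {morph P_copy a b : i j / op i j}.
Proof.
by case=> [[|[|[|[|i]]]] Hi] //; case=> [[|[|[|[|j]]]] Hj] //;
  rewrite /= /P_table /P_copy /= ?inordK //= ?prod_left_zero ?op_prod_right.
Qed.

Lemma P_copy_inj {a b : M} : op a a <> op a b -> injective (P_copy a b).
Proof.
move=> neq_aa_ab.
have lt_neq (i j : P) : i < j -> P_copy a b i <> P_copy a b j.
  move: i j => [[|[|[|[|i]]]] Hi] // [[|[|[|[|j]]]] Hj] // _;
    rewrite /P_copy /= => E; apply: neq_aa_ab.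
  (* the pair (2, 3) was closed by [//] using [neq_aa_ab] itself *)
  - by rewrite {2}E op_prod_right.
  - by rewrite -(prod_left_zero a a b) -E.
  - by rewrite -(prod_left_zero a b a) -E.
  - by rewrite -(op_prod_right a a a) -E op_prod_right.
  - by rewrite -(op_prod_right a a b) -{1}E op_prod_right.
move=> i j E; case: (ltngtP i j) => [lt_ij | lt_ji | /val_inj //].
- by case: (lt_neq _ _ lt_ij E).
- by case: (lt_neq _ _ lt_ji (esym E)).
Qed.

Lemma avoids_P_left_constant : avoids M P -> left_constant M.
Proof.
have sq_eq (a b : M) : avoids M P -> op a a = op a b.
  move=> avoidP; apply: NNPP => neq_aa_ab; move: avoidP.
  exact: inj_morph_not_avoids (P_copy_inj neq_aa_ab) (P_copy_morph a b).
by move=> avoidP x y z; rewrite -!sq_eq.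
Qed.

End CopyOfP.

Theorem mainTheorem15 (M : magma) :
  (forall x y z : M, op (op x y) z = op x y) ->
  (forall x y z : M, op x (op y z) = op x y) ->
  ((forall x y z : M, op x y = op x z /\ op (op x y) z = op x y) <-> avoids M P).
Proof.
move=> prod_left_zero op_prod_right; split.
  by move=> lawsM; apply: left_constant_avoids_P => x y z; case: (lawsM x y z).
move/(avoids_P_left_constant _ prod_left_zero op_prod_right) => constM x y z.
by split; [exact: constM | exact: prod_left_zero].
Qed.
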